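(* In the 1-sided False Negative regime, let the moldgraph $G$ have $m$ edges and belong to a $\rho$-sparse, minor-closed family of graphs. Then the algorithm SolveSparseFN, run on $G$, performs $O(\rho m)$ queries in expectation and uncovers a realized spanning tree with probability $1$. SolveSparseFN$(G)$: if $G$ has a single vertex, return $\emptyset$. Otherwise let $u$ be a vertex of minimum degree, let $N(u)$ be the collection of super-edges incident to $u$, and let $e=\mathrm{DISCOVER}(N(u))$. Contract $e$ to obtain $G'$ and return $\mathrm{SolveSparseFN}(G')\cup\{e\}$. DISCOVER$(\mathcal{S})$, for a collection $\mathcal{S}=\{E_1,\dots,E_k\}$ of edge sets each equipped with a fixed cyclic order: repeat rounds; in each round, for $i=1,\dots,k$, query the next edge $e$ in the cyclic order of $E_i$, and if the answer is ``Yes'' return $e$.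
   Context: Problem (graph connectivity with noisy queries): a graph $G=(V,E)$, the moldgraph, with $n$ vertices and $m$ edges is given. An adversary selects an arbitrary connected spanning subgraph of $G$ to be realized. The algorithm may query an oracle on any edge $e$ (``Is $e$ realized?''), receiving ``Yes''/``No''; each query costs $1$; answers to distinct queries (including repeated queries of the same edge) are independent. Goal: output a spanning tree of $G$ all of whose edges are realized. In the 1-sided False Negative regime: for a non-realized edge the answer is always ``No''; for a realized edge the answer is ``No'' with a constant probability $p<1/2$ and ``Yes'' with probability $1-p$. Multigraph conventions: during the algorithm graphs may have parallel edges; the set of all parallel edges between two vertices $u,v$ is called a super-edge (a simple edge is a super-edge of size $1$). $N(v)$ is the set of super-edges incident to $v$, and $\deg(v)=|N(v)|$. Contracting an edge $e=\{u,v\}$ replaces $u,v$ by a new vertex adjacent to all former neighbours of $u$ or $v$; all edges parallel to $e$ are deleted (no self-loops), and super-edges that become parallel are merged into one super-edge (their union). Edges keep their identity as edges of the original moldgraph. A graph with $m$ edges and $n$ vertices is $\rho$-sparse if $m\le\rho n$. A graph $H$ is a minor of $G$ if it can be obtained by edge deletions, vertex deletions and edge contractions; a family is minor-closed if it contains all minors of its members. *)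

From HB Require Import structures.
From mathcomp Require Import all_boot all_order all_algebra.
From mathcomp Require Import all_classical all_reals all_analysis.
Set Implicit Arguments. Unset Strict Implicit. Unset Printing Implicit Defensive.
Import Order.TTheory GRing.Theory Num.Theory.
Local Open Scope ring_scope.

Definition graph_class (F : forall T : finType, rel T -> Prop) : Prop :=
  forall (T : finType) (e : rel T), F T e -> symmetric e /\ irreflexive e.

Definition iso_closed (F : forall T : finType, rel T -> Prop) : Prop :=
  forall (T T' : finType) (e : rel T) (e' : rel T') (f : T -> T'),
    bijective f -> (forall a b, e' (f a) (f b) = e a b) -> F T e -> F T' e'.

Definition del_edge (T : finType) (e : rel T) (x y : T) : rel T :=
  fun a b => e a b && ~~ (((a == x) && (b == y)) || ((a == y) && (b == x))).

Definition del_vertex (T : finType) (e : rel T) (v : T) : rel {a : T | a != v} :=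
  fun a b => e (val a) (val b).

(* contraction of the edge {x,y}: y is merged into x; no loops, no multi-edges *)
Definition contract_edge (T : finType) (e : rel T) (x y : T) : rel {a : T | a != y} :=
  fun a b => (val a != val b) &&
    [|| e (val a) (val b), (val a == x) && e y (val b) | (val b == x) && e (val a) y].

Definition minor_closed (F : forall T : finType, rel T -> Prop) : Prop :=
  forall (T : finType) (e : rel T), F T e ->
    [/\ forall x y, F T (del_edge e x y),
        forall v : T, F {a : T | a != v} (@del_vertex T e v)
      & forall x y : T, e x y -> F {a : T | a != y} (@contract_edge T e x y)].

Definition nedges (T : finType) (e : rel T) : nat :=
  (#|[set pq : T * T | e pq.1 pq.2]|)./2.

Definition sparse_family (R : realType) (rho : R) (F : forall T : finType, rel T -> Prop) : Prop :=
  forall (T : finType) (e : rel T), F T e -> (nedges e)%:R <= rho * (#|T|)%:R.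

(* The moldgraph: vertices V, edges E with endpoints src/dst.          *)
Section Mold.
Variables (V E : finType) (src dst : E -> V).

Definition joins (ed : E) (x y : V) : bool :=
  ((src ed == x) && (dst ed == y)) || ((src ed == y) && (dst ed == x)).

Definition simple_moldgraph : Prop :=
  (forall ed, src ed != dst ed) /\ (forall e1 e2, joins e1 (src e2) (dst e2) -> e1 = e2).

Definition madj : rel V := fun x y => [exists ed, joins ed x y].

Definition adjS (S : {set E}) : rel V := fun x y => [exists ed in S, joins ed x y].

Definition connected_spanning (S : {set E}) : bool :=
  [forall x, forall y, connect (adjS S) x y].

Definition spanning_tree (S : {set E}) : bool :=
  connected_spanning S && [forall ed in S, ~~ connected_spanning (S :\ ed)].

(* State of SolveSparseFN: the set S of edges contracted so far.  The current
   graph G' is G with all edges of S contracted: its vertices are the classes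
   of connectivity of (V,S); its super-edges are the groups of edges of G joining
   two distinct classes. *)
Definition cls (S : {set E}) (x : V) : {set V} := [set y | connect (adjS S) x y].

Definition crosses (S : {set E}) (x y : V) : bool :=
  madj x y && ~~ connect (adjS S) x y.

Definition nbr_classes (S : {set E}) (u : V) : {set {set V}} :=
  [set cls S y | y in [set y | [exists x in cls S u, crosses S x y]]].

(* degree of (the vertex of G' containing) u = number of incident super-edges *)
Definition deg (S : {set E}) (u : V) : nat := #|nbr_classes S u|.

Definition super_edge (S : {set E}) (u : V) (c : {set V}) : {set E} :=
  [set ed | [exists x in cls S u, exists y in c, joins ed x y]].

Definition super_edges (S : {set E}) (u : V) : {set {set E}} :=
  [set super_edge S u c | c in nbr_classes S u].

Definition min_degree (S : {set E}) (u : V) : bool := [forall v, (deg S u <= deg S v)%N].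

(* The (arbitrary) deterministic choices of SolveSparseFN on the current graph
   G' (determined by S): [plan S] = [:: E_1; ...; E_k], the super-edges of N(u)
   for a minimum-degree vertex u, in some order, each listed in its cyclic order. *)
Definition valid_plan (plan : {set E} -> seq (seq E)) : Prop :=
  forall S, ~~ connected_spanning S ->
    exists2 u, min_degree S u &
      [/\ all uniq (plan S),
          uniq [seq [set x in l] | l <- plan S]
        & forall c, (c \in [seq [set x in l] | l <- plan S]) = (c \in super_edges S u)].

(* The j-th query (j = 0,1,2,...) of DISCOVER(plan S): round j / k, list j mod k. *)
Definition query (plan : {set E} -> seq (seq E)) (S : {set E}) (j : nat) : option E :=
  let L := plan S in
  let k := size L in
  let l := nth [::] L (j %% k) in
  onth l ((j %/ k) %% size l).

Variables (Rz : {set E}) (plan : {set E} -> seq (seq E)).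

(* State = (S, j): S the contracted edges,
   j the number of queries already made in the current DISCOVER call.
   The oracle answer to the query of edge ed is [(ed \in Rz) && b], where b is
   a fresh independent coin with P(b = true) = 1 - p (1-sided false negatives). *)
Definition step (st : {set E} * nat) (b : bool) : {set E} * nat :=
  let: (Sc, j) := st in
  if connected_spanning Sc then st else
  match query plan Sc j with
  | Some ed => if (ed \in Rz) && b then (ed |: Sc, 0%N) else (Sc, j.+1)
  | None => (Sc, j.+1)
  end.

Fixpoint exec (w : nat -> bool) (t : nat) : {set E} * nat :=
  match t with
  | 0 => (finset.set0, 0%N)
  | t'.+1 => step (exec w t') (w t')
  end.

End Mold.

(* Probability of an event depending only on the first t coins, where the
   coins are i.i.d. with P(true) = 1 - p. *)
Definition prefix_prob (R : realType) (p : R) (t : nat) (A : (nat -> bool) -> bool) : R :=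
  \sum_(w : {ffun 'I_t -> bool})
     (\prod_(i < t) (if w i then 1 - p else p)) *
     (A (fun n => match (insub n : option 'I_t) with Some i => w i | None => false end))%:R.

(* Expected number of queries: E[Q] = sum_{t >= 0} P(Q > t), where Q is the
   number of queries before SolveSparseFN terminates (possibly +oo). *)
Definition expected_queries (R : realType) (p : R) (V E : finType) (src dst : E -> V)
    (Rz : {set E}) (plan : {set E} -> seq (seq E)) : \bar R :=
  (\sum_(0 <= t <oo)
     (prefix_prob p t (fun w => ~~ connected_spanning src dst (exec src dst Rz plan w t).1))%:E)%E.

(* Contracting the edges found so far keeps the current graph a minor of G, so it
   lies in the rho-sparse family and its minimum degree is at most 4 rho: DISCOVER
   cycles through d <= 4 rho super-edges.  If the shortest super-edge holding a
   realized edge has s edges, that realized edge is asked once every d s <= 4 rho s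
   queries and each time found with probability 1 - p, and finding any edge of a
   super-edge of size >= s removes >= s crossing edges.  Hence a potential of order
   rho / (1 - p) times the number of crossing edges drops by 1 in expectation with
   every query, so at most 16 rho |E| / (1 - p) queries are expected.  Finiteness of
   this expectation gives termination with probability 1, and the contracted edges
   are realized and form a forest, hence a realized spanning tree. *)

From HB Require Import structures.
From mathcomp Require Import all_boot all_order all_algebra.
From mathcomp Require Import all_classical all_reals all_analysis.
From mathcomp Require Import ring lra zify.
From mathcomp Require Import fintype finset.
Import Order.TTheory GRing.Theory Num.Theory numFieldNormedType.Exports.
Set Implicit Arguments. Unset Strict Implicit. Unset Printing Implicit Defensive.

Lemma connect_exit (T : finType) (e : rel T) (A : pred T) x y :
  connect e x y -> A x -> ~~ A y -> exists a b, [/\ e a b, A a & ~~ A b].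
Proof.
case/connectP => q + ->; elim: q x => [|z q IHq] x /= e_q Ax; first by rewrite Ax.
case/andP: e_q => exz e_q; case: (boolP (A z)) => Az; last by exists x, z.
exact: IHq.
Qed.

Lemma connect_rel0 (T : finType) (e : rel T) x y :
  (forall a b, ~~ e a b) -> connect e x y = (x == y).
Proof.
move=> e0; apply/idP/eqP => [|->]; last exact: connect0.
by case/connectP => -[|z q] /= => [_ ->|]; rewrite ?(negbTE (e0 _ _)).
Qed.

Lemma exists_in_setU (T : finType) (A B : {set T}) (P : pred T) :
  [exists x in A :|: B, P x] = [exists x in A, P x] || [exists x in B, P x].
Proof.
apply/exists_inP/orP => [[x /setUP[] xAB Px]|[] /exists_inP[x xAB Px]].
- by left; apply/exists_inP; exists x.
- by right; apply/exists_inP; exists x.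
- by exists x; rewrite ?in_setU ?xAB.
- by exists x; rewrite ?in_setU ?xAB ?orbT.
Qed.

Lemma exists_in_set1 (T : finType) (a : T) (P : pred T) :
  [exists x in [set a], P x] = P a.
Proof. by apply/exists_inP/idP => [[x /set1P ->]|Pa] //; exists a; rewrite ?set11. Qed.

Lemma bigminn_seq_le (T : eqType) (r : seq T) (P : pred T) (f : T -> nat) d x :
  x \in r -> P x -> \big[minn/d]_(y <- r | P y) f y <= f x.
Proof.
elim: r => [|y r IHr] //; rewrite inE big_cons => /orP[/eqP<- -> |xr Px].
  exact: geq_minl.
by case: ifP => _; [apply: leq_trans (geq_minr _ _) (IHr xr Px)|apply: IHr].
Qed.

Lemma bigminn_seq_attained (T : eqType) (r : seq T) (P : pred T) (f : T -> nat) d :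
  (forall x, x \in r -> P x -> f x <= d) -> has P r ->
  exists2 x, x \in r & P x && (f x == \big[minn/d]_(y <- r | P y) f y).
Proof.
elim: r => [|y r IHr] //= le_d has_yr; rewrite big_cons.
have in_yr x : x \in r -> x \in y :: r by rewrite inE => ->; rewrite orbT.
have le_d' x : x \in r -> P x -> f x <= d by move/in_yr; apply: le_d.
case: (boolP (has P r)) => [/(IHr le_d')[x xr /andP[Px /eqP <-]]|hasNr].
  case: ifP => Py; last by exists x; rewrite ?in_yr ?Px ?eqxx.
  by case: leqP => _; [exists y; rewrite ?mem_head ?Py ?eqxx|exists x; rewrite ?in_yr ?Px ?eqxx].
have Py : P y by move: has_yr; rewrite (negbTE hasNr) orbF.
exists y; rewrite ?mem_head // Py big_hasC // (minn_idPl _) ?eqxx //.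
by apply: le_d; rewrite ?mem_head.
Qed.

Section Countdown.
Variables (P t0 : nat).
Hypotheses (P_gt0 : 0 < P) (t0_lt : t0 < P).

Definition countdown (j : nat) : nat := (t0 + (P - j %% P)) %% P.

Lemma countdown_lt j : countdown j < P.
Proof. exact: ltn_pmod. Qed.

Lemma countdown_spec j : (j + countdown j) %% P = t0.
Proof.
rewrite /countdown modnDmr.
have jP := ltn_pmod j P_gt0.
have -> : j + (t0 + (P - j %% P)) = (j %/ P).+1 * P + t0.
  by rewrite {1}(divn_eq j P) mulSn; lia.
by rewrite modnMDl modn_small.
Qed.

Lemma countdown_unique j k : k < P -> (j + k) %% P = t0 -> k = countdown j.
Proof.
move=> kP jk; have : j + k == j + countdown j %[mod P] by rewrite jk countdown_spec.
by rewrite eqn_modDl !modn_small ?countdown_lt // => /eqP.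
Qed.

Lemma countdown_eq0 j : countdown j = 0 -> j %% P = t0.
Proof. by move=> c0; rewrite -(countdown_spec j) c0 addn0. Qed.

Lemma countdownS j : 0 < countdown j -> countdown j.+1 = (countdown j).-1.
Proof.
move=> c_gt0; apply/esym/countdown_unique.
  by apply: leq_ltn_trans (countdown_lt j); rewrite leq_pred.
by rewrite -(countdown_spec j) addSn -addnS prednK.
Qed.

Lemma countdownS0 j : countdown j = 0 -> countdown j.+1 = P.-1.
Proof.
move=> c0; apply/esym/countdown_unique; first by rewrite prednK.
by rewrite addSn -addnS prednK // modnDr countdown_eq0.
Qed.

End Countdown.

(** * Independent coin flips *)

Section CoinPrefixes.
Local Open Scope ring_scope.
Variables (R : realType) (p : R).

Definition bcons (b : bool) (w : nat -> bool) : nat -> bool :=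
  fun n => if n is n'.+1 then w n' else b.

Definition ffun_seq t (w : {ffun 'I_t -> bool}) : nat -> bool :=
  fun n => if (insub n : option 'I_t) is Some i then w i else false.

Definition fcons t (b : bool) (w : {ffun 'I_t -> bool}) : {ffun 'I_t.+1 -> bool} :=
  [ffun i => if unlift ord0 i is Some j then w j else b].

Lemma ffun_seq0 (w : {ffun 'I_0 -> bool}) : ffun_seq w = fun _ => false.
Proof. by apply: funext => n; rewrite /ffun_seq; case: insubP => // -[]. Qed.

Lemma ffun_seq_cons t b (w : {ffun 'I_t -> bool}) : ffun_seq (fcons b w) = bcons b (ffun_seq w).
Proof.
apply: funext => -[|n]; rewrite /ffun_seq /=.
  case: insubP => [i _ iE|] //=; rewrite ffunE (_ : i = ord0) ?unlift_none //.
  exact: val_inj.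
case: (ltnP n t) => [nt|tn]; last by rewrite !insubF // ltnNge ?ltnS tn.
rewrite (insubT (fun m => m < t.+1)%N (nt : n.+1 < t.+1)%N) (insubT (fun m => m < t)%N nt) /= ffunE.
by rewrite (_ : Sub n.+1 _ = lift ord0 (Ordinal nt)) ?liftK //; apply: val_inj.
Qed.

Lemma prefix_prob0 A : prefix_prob p 0 A = (A (fun _ => false))%:R.
Proof.
rewrite /prefix_prob (big_pred1 [ffun i => false]); last first.
  by move=> w /=; apply/esym/eqP/ffunP => -[].
by rewrite big_ord0 mul1r -/(ffun_seq _) ffun_seq0.
Qed.

Lemma prefix_probS t A : prefix_prob p t.+1 A =
  (1 - p) * prefix_prob p t (fun w => A (bcons true w)) +
  p * prefix_prob p t (fun w => A (bcons false w)).
Proof.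
have fcons_bij : bijective (fun bw : bool * {ffun 'I_t -> bool} => fcons bw.1 bw.2).
  exists (fun W : {ffun 'I_t.+1 -> bool} => (W ord0, [ffun j => W (lift ord0 j)])).
    move=> [b w] /=; rewrite ffunE unlift_none; congr pair.
    by apply/ffunP => j; rewrite !ffunE liftK.
  by move=> W; apply/ffunP => i; rewrite !ffunE; case: unliftP => [j ->|->]; rewrite ?ffunE.
rewrite /prefix_prob (reindex _ (onW_bij _ fcons_bij)) /=.
rewrite -(pair_big predT predT (fun b w =>
  (\prod_(i < t.+1) (if fcons b w i then 1 - p else p)) * (A (ffun_seq (fcons b w)))%:R)) /=.
rewrite big_bool /= !big_distrr /=; congr (_ + _); apply: eq_bigr => w _;
  rewrite big_ord_recl !ffunE unlift_none ffun_seq_cons -mulrA;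
  by congr (_ * (_ * _)); apply: eq_bigr => i _; rewrite ffunE liftK.
Qed.

Lemma prefix_probT t : prefix_prob p t (fun _ => true) = 1.
Proof. by elim: t => [|t IHt]; rewrite ?prefix_prob0 // prefix_probS IHt !mulr1 subrK. Qed.

Lemma prefix_probC t A : prefix_prob p t A = 1 - prefix_prob p t (fun w => ~~ A w).
Proof.
rewrite -(prefix_probT t) /prefix_prob -sumrB; apply: eq_bigr => w _.
by case: (A _); rewrite ?mulr1 ?mulr0 ?subr0 ?subrr.
Qed.

Lemma eq_prefix_prob t A B : A =1 B -> prefix_prob p t A = prefix_prob p t B.
Proof. by move=> AB; apply: eq_bigr => w _; rewrite AB. Qed.

Hypotheses (p_ge0 : 0 <= p) (p_le1 : p <= 1).

Lemma prefix_prob_ge0 t A : 0 <= prefix_prob p t A.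
Proof.
apply: sumr_ge0 => w _; rewrite mulr_ge0 // prodr_ge0 // => i _.
by case: (w i); rewrite // subr_ge0.
Qed.

Section Runs.
Variables (S : Type) (stp : S -> bool -> S).

Fixpoint run (s : S) (w : nat -> bool) (t : nat) : S :=
  if t is t'.+1 then run (stp s (w 0%N)) (fun n => w n.+1) t' else s.

Lemma runS s w t : run s w t.+1 = stp (run s w t) (w t).
Proof. by elim: t s w => [|t IHt] s w //=; rewrite -IHt. Qed.

Variables (done : pred S) (pot : S -> R).
Hypotheses (pot_ge0 : forall s, 0 <= pot s) (done_stp : forall s b, done s -> stp s b = s).
Hypothesis pot_step : forall s, ~~ done s ->
  1 + (1 - p) * pot (stp s true) + p * pot (stp s false) <= pot s.

(* The left-hand side is the expected number of steps, truncated at [T], spent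
   outside [done]. *)
Lemma sum_prob_running_le s T :
  \sum_(0 <= t < T) prefix_prob p t (fun w => ~~ done (run s w t)) <= pot s.
Proof.
elim: T s => [|T IHT] s; first by rewrite big_geq.
rewrite big_nat_recl // prefix_prob0 /=.
under eq_bigr => t _ do rewrite prefix_probS.
rewrite big_split /= -!big_distrr /=.
have rest_le : (1 - p) * \sum_(0 <= t < T) prefix_prob p t (fun w => ~~ done (run (stp s true) w t))
    + p * \sum_(0 <= t < T) prefix_prob p t (fun w => ~~ done (run (stp s false) w t))
    <= (1 - p) * pot (stp s true) + p * pot (stp s false).
  by apply: lerD; apply: ler_wpM2l; rewrite ?subr_ge0 //; apply: IHT.
case: (boolP (done s)) => ds.
  rewrite (_ : (~~ true)%:R = 0 :> R) // add0r; apply: le_trans rest_le _.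
  by rewrite !done_stp // -mulrDl subrK mul1r.
apply: le_trans (pot_step ds); rewrite -addrA; apply: lerD rest_le; exact: lexx.
Qed.

End Runs.

End CoinPrefixes.

(** * Contracted graphs *)

Notation block A := {C : {set _} | C \in A}.

Section Connectivity.
Variables (V E : finType) (src dst : E -> V).
Local Notation adj := (adjS src dst).
Local Notation conn S := (connect (adjS src dst S)).
Local Notation cls := (cls src dst).
Implicit Types (S : {set E}) (x y : V) (ed : E).

Lemma joinsC ed x y : joins src dst ed x y = joins src dst ed y x.
Proof. by rewrite /joins orbC. Qed.

Lemma joins_ends ed : joins src dst ed (src ed) (dst ed).
Proof. by rewrite /joins !eqxx. Qed.

Lemma adjS_sym S : symmetric (adj S).
Proof. by move=> x y; apply: eq_existsb => ed; rewrite joinsC. Qed.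

Lemma connS_sym S : connect_sym (adj S).
Proof. exact/sym_connect_sym/adjS_sym. Qed.

Lemma connS_sub S S' x y : S \subset S' -> conn S x y -> conn S' x y.
Proof.
move=> sSS'; apply: connect_sub => a b /exists_inP[ed Sed ab].
by apply/connect1/exists_inP; exists ed; rewrite ?(subsetP sSS').
Qed.

Lemma connS_edge S ed : ed \in S -> conn S (src ed) (dst ed).
Proof. by move=> Sed; apply/connect1/exists_inP; exists ed; rewrite ?joins_ends. Qed.

Lemma connS_joins S ed x y :
  joins src dst ed x y -> conn S (src ed) (dst ed) = conn S x y.
Proof. by case/orP => /andP[/eqP-> /eqP->] //; rewrite connS_sym. Qed.

Lemma connS_setU1 S ed x y : conn (ed |: S) x y =
  [|| conn S x y, conn S x (src ed) && conn S (dst ed) y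
    | conn S x (dst ed) && conn S (src ed) y].
Proof.
have sSS' : S \subset ed |: S by apply/subsetP => z Sz; rewrite setU1r.
apply/idP/idP => [|/or3P[]].
- pose reach := [pred z | [|| conn S x z, conn S x (src ed) && conn S (dst ed) z
                           | conn S x (dst ed) && conn S (src ed) z]].
  have reach_closed : fingraph.closed (adj (ed |: S)) reach.
    apply: intro_closed; first exact: connS_sym.
    move=> y' z /exists_inP[e' /setU1P[->|Se'] j]; rewrite !inE.
      by case/orP: j => /andP[/eqP<- /eqP<-] /or3P[->|/andP[-> _]|/andP[-> _]];
        rewrite ?connect0 ?andbT ?orbT.
    have cyz : conn S y' z by apply/connect1/exists_inP; exists e'.
    by case/or3P=> [cxy|/andP[-> cy]|/andP[-> cy]];
      rewrite ?(connect_trans cxy cyz) ?(connect_trans cy cyz) ?orbT.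
  by move=> cxy; move: (closed_connect reach_closed cxy); rewrite !inE connect0 => <-.
- exact: connS_sub.
- move=> /andP[xa bz]; apply: connect_trans (connS_sub sSS' xa) _.
  by apply: connect_trans (connS_edge (setU11 _ _)) (connS_sub sSS' bz).
- move=> /andP[xb ay]; apply: connect_trans (connS_sub sSS' xb) _.
  rewrite connS_sym; apply: connect_trans (connS_sub sSS' _) (connS_edge (setU11 _ _)).
  by rewrite connS_sym.
Qed.

Lemma mem_cls S x y : (y \in cls S x) = conn S x y.
Proof. by rewrite inE. Qed.

Lemma eq_cls S x y : (cls S x == cls S y) = conn S x y.
Proof.
apply/eqP/idP => [clsE|cxy]; first by rewrite -mem_cls clsE mem_cls connect0.
apply/setP => z; rewrite !mem_cls; apply/idP/idP => [cxz|]; last exact: connect_trans.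
by apply: connect_trans cxz; rewrite connS_sym.
Qed.

Definition cls_set S : {set {set V}} := [set cls S x | x in V].

Lemma mem_cls_set S x : cls S x \in cls_set S.
Proof. exact: imset_f. Qed.

Lemma cls_setP S C y : C \in cls_set S -> y \in C -> C = cls S y.
Proof. by case/imsetP => x _ ->; rewrite mem_cls => cxy; apply/eqP; rewrite eq_cls. Qed.

Lemma card_cls_set_gt1 S : ~~ connected_spanning src dst S -> 1 < #|cls_set S|.
Proof.
case/forallPn => x /forallPn[y nxy].
apply: leq_trans (subset_leq_card (_ : [set cls S x; cls S y] \subset _)).
  by rewrite cards2 eq_cls nxy.
by apply/subsetP => C /set2P[]->; apply: mem_cls_set.
Qed.

Definition linked (C D : {set V}) : bool :=
  [exists x in C, exists y in D, madj src dst x y].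

Lemma linkedUl C1 C2 D : linked (C1 :|: C2) D = linked C1 D || linked C2 D.
Proof. exact: exists_in_setU. Qed.

Lemma linkedUr C D1 D2 : linked C (D1 :|: D2) = linked C D1 || linked C D2.
Proof.
rewrite /linked; apply/exists_inP/orP => [[x Cx]|[] /exists_inP[x Cx xD]].
- by rewrite exists_in_setU => /orP[] xD; [left|right]; apply/exists_inP; exists x.
- by exists x; rewrite // exists_in_setU xD.
- by exists x; rewrite // exists_in_setU xD orbT.
Qed.

(* The graph obtained from G by contracting each block of A to a vertex. *)
Definition block_adj (A : {set {set V}}) : rel (block A) :=
  fun C D => (val C != val D) && linked (val C) (val D).
Arguments block_adj : clear implicits.

Local Notation contracted S := (block_adj (cls_set S)).

Lemma card_block (A : {set {set V}}) : #|{: block A}| = #|A|.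
Proof. by rewrite card_sig; apply: eq_card. Qed.

Lemma cls0 x : cls set0 x = [set x].
Proof.
apply/setP => y; rewrite mem_cls in_set1 connect_rel0 ?(eq_sym x) //.
by move=> a b; apply/exists_inP => -[ed]; rewrite in_set0.
Qed.

Lemma cls_setU1_conn S ed :
  conn S (src ed) (dst ed) -> cls_set (ed |: S) = cls_set S.
Proof.
move=> cab; apply: eq_imset => x; apply/setP => y; rewrite !mem_cls connS_setU1.
have cba : conn S (dst ed) (src ed) by rewrite connS_sym.
apply/idP/idP => [|->//]; case/or3P => [//|/andP[xa bz]|/andP[xa bz]].
- exact: connect_trans xa (connect_trans cab bz).
- exact: connect_trans xa (connect_trans cba bz).
Qed.

Section Minor.
Local Unset Implicit Arguments.
Variable F : forall T : finType, rel T -> Prop.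
Local Set Implicit Arguments.
Hypotheses (Fiso : iso_closed F) (Fminor : minor_closed F).

Section ContractEdge.
Variables (S : {set E}) (ed : E).
Hypothesis ncab : ~~ conn S (src ed) (dst ed).
Local Notation a := (src ed).
Local Notation b := (dst ed).
Local Notation ca := (cls S (src ed)).
Local Notation cb := (cls S (dst ed)).

Lemma cls_setU1 x :
  cls (ed |: S) x = if conn S a x || conn S b x then ca :|: cb else cls S x.
Proof.
apply/setP => y; rewrite mem_cls connS_setU1.
case: ifPn => [/orP[ax|bx]|/norP[nax nbx]]; rewrite ?in_setU !mem_cls.
- have xa : conn S x a by rewrite connS_sym.
  by rewrite !(same_connect (@connS_sym _) xa) connect0 (negbTE ncab) andTb andFb orbF.
- have xb : conn S x b by rewrite connS_sym.
  rewrite !(same_connect (@connS_sym _) xb) connect0 [conn S b a]connS_sym (negbTE ncab).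
  by rewrite andTb andFb orFb orbC.
- rewrite connS_sym in nax; rewrite connS_sym in nbx.
  by rewrite (negbTE nax) (negbTE nbx) !andFb !orbF.
Qed.

Definition merge_cls (C : {set V}) : {set V} := if C == ca then ca :|: cb else C.

Lemma merge_cls_in C : C \in cls_set S -> C != cb -> merge_cls C \in cls_set (ed |: S).
Proof.
move=> /imsetP[x _ ->] nxb; rewrite /merge_cls; case: ifPn => [_|nxa].
  by rewrite (_ : ca :|: cb = cls (ed |: S) a) ?mem_cls_set // cls_setU1 connect0.
rewrite (_ : cls S x = cls (ed |: S) x) ?mem_cls_set // cls_setU1.
rewrite eq_sym eq_cls in nxa; rewrite eq_sym eq_cls in nxb.
by rewrite (negbTE nxa) (negbTE nxb).
Qed.

Lemma merge_cls_eq C D : C \in cls_set S -> D \in cls_set S -> C != cb -> D != cb ->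
  (merge_cls C == merge_cls D) = (C == D).
Proof.
have union_new X : X \in cls_set S -> X != cb -> ca :|: cb != X.
  move=> XS nXb; apply/eqP => uX; case/eqP: nXb; apply: cls_setP XS _.
  by rewrite -uX in_setU !mem_cls connect0 orbT.
move=> CS DS nCb nDb; apply/eqP/eqP => [|->] //; rewrite /merge_cls.
case: eqP => [->|_]; case: eqP => [->|_] // uE.
- by case/eqP: (union_new D DS nDb).
- by case/eqP: (union_new C CS nCb).
Qed.

Lemma cls_setU1_sub : cls_set (ed |: S) \subset merge_cls @: (cls_set S :\ cb).
Proof.
apply/subsetP => _ /imsetP[x _ ->]; rewrite cls_setU1.
case: ifP => [_|/norP[nax nbx]]; apply/imsetP.
  by exists ca; rewrite ?in_setD1 ?eq_cls ?ncab ?mem_cls_set // /merge_cls eqxx.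
exists (cls S x); first by rewrite in_setD1 mem_cls_set andbT eq_cls connS_sym.
by rewrite /merge_cls eq_cls connS_sym (negbTE nax).
Qed.

Lemma block_adj_merge_cls C D : C \in cls_set S -> D \in cls_set S -> C != cb -> D != cb ->
  (merge_cls C != merge_cls D) && linked (merge_cls C) (merge_cls D) =
  (C != D) && [|| (C != D) && linked C D, (C == ca) && ((cb != D) && linked cb D)
                | (D == ca) && ((C != cb) && linked C cb)].
Proof.
move=> CS DS nCb nDb; rewrite merge_cls_eq // /merge_cls.
case: (eqVneq C ca) => [->|nCa]; case: (eqVneq D ca) => [->|nDa] //=.
- by rewrite linkedUl eq_sym nDb orbF.
- by rewrite linkedUr nCb; case: (C != ca).
- by case: (C != D); rewrite ?orbF.
Qed.

Lemma F_contract_step : F _ (contracted S) -> F _ (contracted (ed |: S)).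
Proof.
move=> FS.
pose ca' : block (cls_set S) := Sub ca (mem_cls_set S a).
pose cb' : block (cls_set S) := Sub cb (mem_cls_set S b).
have ab' : contracted S ca' cb'.
  rewrite /block_adj /= eq_cls ncab; apply/exists_inP; exists a; rewrite ?mem_cls ?connect0 //.
  apply/exists_inP; exists b; rewrite ?mem_cls ?connect0 //.
  by apply/existsP; exists ed; rewrite joins_ends.
have [_ _ /(_ ca' cb' ab') Fcontr] := Fminor FS.
pose d0 : block (cls_set (ed |: S)) := Sub (cls (ed |: S) a) (mem_cls_set (ed |: S) a).
pose f (c : {c : block (cls_set S) | c != cb'}) := insubd d0 (merge_cls (val (val c))).
have val_nb (c : {c : block (cls_set S) | c != cb'}) : val (val c) != cb.
  by apply: contra (valP c) => /eqP cE; apply/eqP/val_inj.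
have valf c : val (f c) = merge_cls (val (val c)).
  by apply: insubdK; apply: merge_cls_in (valP (val c)) (val_nb c).
have f_bij : bijective f.
  apply: inj_card_bij => [c1 c2 /(congr1 val)|].
    rewrite !valf => /eqP.
    by rewrite merge_cls_eq ?val_nb ?(valP (val c1)) ?(valP (val c2)) // => /eqP /val_inj /val_inj.
  rewrite card_block card_sig (eq_card (B := predC1 cb')) // cardC1 card_block.
  apply: leq_trans (subset_leq_card cls_setU1_sub) (leq_trans (leq_imset_card _ _) _).
  by rewrite (cardsD1 cb (cls_set S)) mem_cls_set.
apply: Fiso f_bij _ Fcontr => c1 c2.
have valE (c : {c : block (cls_set S) | c != cb'}) c' : (val c == c') = (val (val c) == val c').
  by [].
rewrite /block_adj /contract_edge !valf !valE /= -[val c1 != val c2]/(val (val c1) != val (val c2)).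
exact: block_adj_merge_cls (valP _) (valP _) (val_nb _) (val_nb _).
Qed.

End ContractEdge.

Hypotheses (Gsimple : simple_moldgraph src dst) (FG : F V (madj src dst)).

Lemma madj_neq x y : madj src dst x y -> x != y.
Proof.
case/existsP => ed j; apply/eqP => xy; subst y; case: Gsimple => /(_ ed) + _.
by case/orP: j => /andP[/eqP-> /eqP->]; rewrite eqxx.
Qed.

Lemma F_contracted0 : F _ (contracted set0).
Proof.
pose f x : block (cls_set set0) := Sub (cls set0 x) (mem_cls_set set0 x).
have f_bij : bijective f.
  apply: inj_card_bij => [x y /(congr1 val)|]; first by rewrite /= !cls0; apply: set1_inj.
  by rewrite card_sig; apply: leq_trans (leq_imset_card _ _) _.
apply: Fiso f_bij _ FG => x y.
rewrite /block_adj /= !cls0 /linked !exists_in_set1 (inj_eq set1_inj).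
by case: (boolP (madj src dst x y)) => [/madj_neq ->|]; rewrite ?andbF.
Qed.

Lemma F_contracted S : F _ (contracted S).
Proof.
rewrite -[S]set_enum; elim: (enum S) => [|ed s IH]; first by rewrite set_nil; apply: F_contracted0.
rewrite set_cons; case: (boolP (conn [set x in s] (src ed) (dst ed))) => cab.
  by rewrite cls_setU1_conn.
exact: F_contract_step.
Qed.

Lemma card_contracted_nbr S x (C : block (cls_set S)) : val C = cls S x ->
  #|[set D | contracted S C D]| = deg src dst S x.
Proof.
move=> Cx; rewrite /deg -(card_imset _ val_inj); apply: eq_card => D.
apply/imsetP/imsetP.
- case=> D'; rewrite inE => /andP[nCD /exists_inP[x' Cx' /exists_inP[y D'y x'y]]] ->.
  exists y; last exact: cls_setP (valP D') D'y.
  rewrite inE; apply/exists_inP; exists x'; first by rewrite -Cx.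
  rewrite /crosses x'y /=; apply: contra nCD => cx'y.
  by rewrite (cls_setP (valP C) Cx') (cls_setP (valP D') D'y) eq_cls.
- case=> y; rewrite inE => /exists_inP[x' xx' /andP[x'y ncx'y]] ->.
  exists (Sub (cls S y) (mem_cls_set S y)) => //.
  rewrite inE /block_adj /= Cx eq_cls; apply/andP; split.
    apply: contra ncx'y => cxy; rewrite mem_cls in xx'.
    by apply: connect_trans cxy; rewrite connS_sym.
  apply/exists_inP; exists x' => //; apply/exists_inP; exists y => //.
  by rewrite mem_cls connect0.
Qed.

Lemma card_rel_pairs (T : finType) (e : rel T) :
  #|[set pq : T * T | e pq.1 pq.2]| = \sum_(c : T) #|[set d | e c d]|.
Proof.
rewrite -sum1_card big_mkcond /=.
under [RHS]eq_bigr => c _ do rewrite -sum1_card big_mkcond /=.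
by rewrite pair_big /=; apply: eq_bigr => -[c d] _; rewrite !inE.
Qed.

Lemma min_degree_mul_le S u : min_degree src dst S u ->
  #|cls_set S| * deg src dst S u <=
  #|[set pq : block (cls_set S) * block (cls_set S) | contracted S pq.1 pq.2]|.
Proof.
move=> umin; rewrite card_rel_pairs -card_block -sum_nat_const.
apply: leq_sum => C _; case/imsetP: (valP C) => x _ Cx.
by rewrite (card_contracted_nbr Cx); apply: (forallP umin).
Qed.

Section Sparse.
Local Open Scope ring_scope.
Variables (R : realType) (rho : R).
Hypothesis Fsparse : sparse_family rho F.

(* The contracted graph is in F, hence rho-sparse; a minimum degree d gives
   k d <= 2 rho k + 1 for its k >= 2 vertices, so d <= 2 rho + 1/2 <= 4 rho as d >= 1. *)
Lemma min_degree_le S u : ~~ connected_spanning src dst S -> min_degree src dst S u ->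
  (0 < deg src dst S u)%N -> (deg src dst S u)%:R <= 4 * rho.
Proof.
move=> nS umin d_gt0.
have := Fsparse (F_contracted S); rewrite /nedges card_block.
set N := #|[set pq : block (cls_set S) * block (cls_set S) | contracted S pq.1 pq.2]|.
set k := #|cls_set S|; set d := deg src dst S u => half_le.
have N_le : (N <= (N./2).*2 + 1)%N.
  by rewrite -{1}(odd_double_half N) addnC leq_add2l leq_b1.
have : (k * d)%:R <= ((N./2).*2 + 1)%:R :> R.
  by rewrite ler_nat (leq_trans (min_degree_mul_le umin) N_le).
rewrite natrM natrD -mul2n natrM => kd_le.
have k_ge2 : 2 <= k%:R :> R by rewrite (ler_nat R 2) card_cls_set_gt1.
have d_ge1 : 1 <= d%:R :> R by rewrite ler1n.
nra.
Qed.

End Sparse.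

End Minor.

(** * Runs of the algorithm *)

Definition forest S := [forall ed in S, ~~ conn (S :\ ed) (src ed) (dst ed)].

Lemma forest_setU1 S ed : forest S -> ~~ conn S (src ed) (dst ed) -> forest (ed |: S).
Proof.
move=> S_forest nab; apply/forall_inP => e' /setU1P[->|Se'].
  apply: contra nab; apply: connS_sub; apply/subsetP => z; rewrite !inE.
  by case/andP => /negbTE->.
have ne' : e' != ed by apply: contraNneq nab => <-; apply: connS_edge.
have DE : (ed |: S) :\ e' = ed |: (S :\ e').
  by apply/setP => z; rewrite !inE; case: eqVneq => [->|]; rewrite ?(negbTE ne').
have sub : S :\ e' \subset S by apply: subsetDl.
have ne'S := forall_inP S_forest e' Se'.
have cS : conn S (src e') (dst e') by apply: connS_edge.
rewrite DE connS_setU1 (negbTE ne'S) orFb.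
apply/negP => /orP[]/andP[ea be]; case/negP: nab.
- rewrite connS_sym in ea; rewrite connS_sym in be.
  exact: connect_trans (connS_sub sub ea) (connect_trans cS (connS_sub sub be)).
- rewrite connS_sym in cS.
  exact: connect_trans (connS_sub sub be) (connect_trans cS (connS_sub sub ea)).
Qed.

Lemma forest_spanning_tree S :
  forest S -> connected_spanning src dst S -> spanning_tree src dst S.
Proof.
move=> S_forest S_conn; rewrite /spanning_tree S_conn; apply/forall_inP => ed Sed.
apply/forallPn; exists (src ed); apply/forallPn; exists (dst ed).
exact: (forall_inP S_forest ed Sed).
Qed.

Section Discover.
Variables (Rz : {set E}) (plan : {set E} -> seq (seq E)).
Hypotheses (Rz_conn : connected_spanning src dst Rz) (plan_valid : valid_plan src dst plan).
Local Notation done S := (connected_spanning src dst S).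

Lemma super_edge_crossing S u c ed : c \in nbr_classes src dst S u ->
  ed \in super_edge src dst S u c -> ~~ conn S (src ed) (dst ed).
Proof.
case/imsetP => y0; rewrite inE => /exists_inP[x0 ux0 /andP[_ nx0y0]] ->.
rewrite inE => /exists_inP[x ux /exists_inP[y y0y j]].
rewrite (connS_joins _ j); apply: contra nx0y0 => cxy.
move: ux ux0 y0y; rewrite !mem_cls => ux ux0 y0y.
rewrite connS_sym in ux0; rewrite connS_sym in y0y.
exact: connect_trans ux0 (connect_trans ux (connect_trans cxy y0y)).
Qed.

Lemma super_edge_merged S u c ed ed' : c \in nbr_classes src dst S u ->
  ed \in super_edge src dst S u c -> ed' \in super_edge src dst S u c ->
  conn (ed |: S) (src ed') (dst ed').
Proof.
case/imsetP => y0 _ ->; rewrite !inE.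
move=> /exists_inP[x ux /exists_inP[y y0y j]] /exists_inP[x' ux' /exists_inP[y' y0y' j']].
rewrite (connS_joins _ j'); move: ux ux' y0y y0y'; rewrite !mem_cls => ux ux' y0y y0y'.
have sSS' : S \subset ed |: S by apply/subsetP => z Sz; rewrite setU1r.
have cxy : conn (ed |: S) x y by rewrite -(connS_joins _ j) connS_edge ?setU11.
rewrite connS_sym in ux'; rewrite connS_sym in y0y.
apply: connect_trans (connS_sub sSS' ux') _; apply: connect_trans (connS_sub sSS' ux) _.
apply: connect_trans cxy _; apply: connect_trans (connS_sub sSS' y0y) _.
exact: connS_sub sSS' y0y'.
Qed.

Lemma plan_spec S : ~~ done S ->
  exists2 u, min_degree src dst S u &
  [/\ all uniq (plan S), size (plan S) <= deg src dst S u
    & forall l, l \in plan S -> exists2 c, c \in nbr_classes src dst S u &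
         [set x in l] = super_edge src dst S u c].
Proof.
move=> nS; have [u umin [plan_uniq plan_sets_uniq plan_sets]] := plan_valid nS.
exists u => //; split => // [|l l_in].
  rewrite -(size_map (fun l => [set x in l])) -(card_uniqP plan_sets_uniq).
  by rewrite (eq_card plan_sets); apply: leq_imset_card.
have : [set x in l] \in super_edges src dst S u by rewrite -plan_sets; apply: map_f.
by case/imsetP => c c_in ->; exists c.
Qed.

Lemma plan_uniq S l : ~~ done S -> l \in plan S -> uniq l.
Proof. by move=> nS; have [u _ [/allP + _ _]] := plan_spec nS; apply. Qed.

Lemma plan_crossing S l ed : ~~ done S -> l \in plan S -> ed \in l ->
  ~~ conn S (src ed) (dst ed).
Proof.
move=> nS l_in ed_in; have [u _ [_ _ /(_ l l_in)[c c_in lE]]] := plan_spec nS.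
by apply: (super_edge_crossing c_in); rewrite -lE inE.
Qed.

Lemma plan_merged S l ed ed' : ~~ done S -> l \in plan S -> ed \in l -> ed' \in l ->
  conn (ed |: S) (src ed') (dst ed').
Proof.
move=> nS l_in ed_in ed'_in; have [u _ [_ _ /(_ l l_in)[c c_in lE]]] := plan_spec nS.
by apply: (super_edge_merged c_in); rewrite -lE inE.
Qed.

(* The realized graph is connected, so some realized edge leaves the class of u. *)
Lemma plan_has_realized S : ~~ done S -> exists2 l, l \in plan S & has (mem Rz) l.
Proof.
move=> nS; have [u _ [_ _ plan_sets]] := plan_valid nS.
have [v nuv] : exists v, ~~ conn S u v.
  case/forallPn: nS => x /forallPn[y nxy].
  case: (boolP (conn S u x)) => ux; last by exists x.
  by exists y; apply: contra nxy; apply: connect_trans; rewrite connS_sym.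
have [a [b [/exists_inP[ed Rz_ed j] ua nub]]] :=
  connect_exit (A := [pred z | conn S u z]) (forallP (forallP Rz_conn u) v) (connect0 _ _) nuv.
have nab : ~~ conn S a b by apply: contra nub; apply: connect_trans ua.
have ed_in : ed \in super_edge src dst S u (cls S b).
  by rewrite inE; apply/exists_inP; exists a; rewrite ?mem_cls //;
    apply/exists_inP; exists b; rewrite ?mem_cls ?connect0.
have : super_edge src dst S u (cls S b) \in super_edges src dst S u.
  apply: imset_f; apply/imsetP; exists b => //; rewrite inE; apply/exists_inP.
  by exists a; rewrite ?mem_cls // /crosses nab andbT; apply/existsP; exists ed.
rewrite -plan_sets => /mapP[l l_in lE]; exists l => //.
by apply/hasP; exists ed; rewrite // -[ed \in l](@in_set _ (mem l)) -lE.
Qed.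

Definition crossing S : {set E} := [set ed | ~~ conn S (src ed) (dst ed)].

Lemma card_crossing_setU1 S l ed : ~~ done S -> l \in plan S -> ed \in l ->
  #|crossing (ed |: S)| + size l <= #|crossing S|.
Proof.
move=> nS l_in ed_in.
have l_sub : [set x in l] \subset crossing S.
  by apply/subsetP => e'; rewrite !inE; apply: plan_crossing.
have crossing_sub : crossing (ed |: S) \subset crossing S :\: [set x in l].
  apply/subsetP => e'; rewrite !inE => ne'; apply/andP; split.
    by apply: contra ne'; apply: plan_merged.
  by apply: contra ne'; apply: connS_sub; apply/subsetP => z Sz; rewrite setU1r.
rewrite -(card_uniqP (plan_uniq nS l_in)) -[#|l|]cardsE.
apply: leq_trans (leq_add (subset_leq_card crossing_sub) (leqnn _)) _.
by rewrite cardsD (setIidPr l_sub) subnK // subset_leq_card.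
Qed.

(* DISCOVER asks its [j]-th query in list [j mod k] of [plan S] (k its length), at
   position [(j / k) mod (size of that list)]. The first realized edge of a shortest
   list holding a realized edge is therefore asked exactly at the times
   [j = target_time S (mod period S)]; [wait S j] counts the queries until the next one. *)
Definition target_size S := \big[minn/#|E|]_(l <- plan S | has (mem Rz) l) size l.
Definition target_index S :=
  find (fun l => has (mem Rz) l && (size l == target_size S)) (plan S).
Definition target_list S := nth [::] (plan S) (target_index S).
Definition target_pos S := find (mem Rz) (target_list S).
Definition period S := size (plan S) * target_size S.
Definition target_time S := target_pos S * size (plan S) + target_index S.
Definition wait S j := countdown (period S) (target_time S) j.

Lemma target_size_le S l : l \in plan S -> has (mem Rz) l -> target_size S <= size l.
Proof. exact: bigminn_seq_le. Qed.

Lemma target_spec S : ~~ done S ->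
  [/\ target_index S < size (plan S), target_list S \in plan S,
      has (mem Rz) (target_list S) & size (target_list S) = target_size S].
Proof.
move=> nS; have [l l_in l_real] := plan_has_realized nS.
have size_le l' : l' \in plan S -> has (mem Rz) l' -> size l' <= #|E|.
  by move=> l'_in _; rewrite -(card_uniqP (plan_uniq nS l'_in)) max_card.
have [l' l'_in l'_min] := bigminn_seq_attained size_le (introT hasP (ex_intro2 _ _ l l_in l_real)).
have has_target : has (fun l => has (mem Rz) l && (size l == target_size S)) (plan S).
  by apply/hasP; exists l'.
have idx_lt : target_index S < size (plan S) by rewrite /target_index -has_find.
have := nth_find [::] has_target; rewrite -/(target_index S) -/(target_list S).
by case/andP => target_real /eqP target_size_eq; split => //; apply: mem_nth.
Qed.

Lemma target_pos_spec S : ~~ done S -> target_pos S < target_size S /\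
  exists2 r, onth (target_list S) (target_pos S) = Some r & r \in Rz.
Proof.
move=> nS; have [_ _ + <-] := target_spec nS; rewrite /target_pos.
case: (target_list S) => [|e0 l] // l_real; split; first by rewrite -has_find.
exists (nth e0 (e0 :: l) (find (mem Rz) (e0 :: l))); last exact: nth_find.
by rewrite onthE (nth_map e0) // -has_find.
Qed.

Lemma period_gt0 S : ~~ done S -> 0 < period S.
Proof.
move=> nS; have [k_gt _ _ _] := target_spec nS; have [pos_lt _] := target_pos_spec nS.
by rewrite muln_gt0 (leq_ltn_trans _ k_gt) // (leq_ltn_trans _ pos_lt).
Qed.

Lemma target_time_lt S : ~~ done S -> target_time S < period S.
Proof.
move=> nS; have [k_gt _ _ _] := target_spec nS; have [pos_lt _] := target_pos_spec nS.
rewrite /target_time /period; nia.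
Qed.

Lemma query_target S j : ~~ done S -> j %% period S = target_time S ->
  query plan S j = onth (target_list S) (target_pos S).
Proof.
move=> nS jE; have [k_gt _ _ sizeE] := target_spec nS; have [pos_lt _] := target_pos_spec nS.
have k_gt0 : 0 < size (plan S) by apply: leq_ltn_trans k_gt.
have jE' : j = ((j %/ period S) * target_size S + target_pos S) * size (plan S) + target_index S.
  by rewrite {1}(divn_eq j (period S)) jE /period /target_time; nia.
have j_mod : j %% size (plan S) = target_index S by rewrite jE' modnMDl modn_small.
have j_div : j %/ size (plan S) = (j %/ period S) * target_size S + target_pos S.
  by rewrite [in LHS]jE' divnMDl // (divn_small k_gt) addn0.
by rewrite /query j_mod j_div -/(target_list S) sizeE modnMDl modn_small.
Qed.

Lemma query_in_plan S j ed : ~~ done S -> query plan S j = Some ed ->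
  exists2 l, l \in plan S & ed \in l.
Proof.
move=> nS qE; have [k_gt _ _ _] := target_spec nS.
exists (nth [::] (plan S) (j %% size (plan S))); last by apply/onthP; eexists; exact: qE.
by rewrite mem_nth // ltn_pmod // (leq_ltn_trans _ k_gt).
Qed.

Lemma wait0_realized S j : ~~ done S -> wait S j = 0 ->
  exists2 r, query plan S j = Some r & r \in Rz.
Proof.
move=> nS w0; have [_ [r rE r_real]] := target_pos_spec nS; exists r => //.
by rewrite query_target // (countdown_eq0 (period_gt0 nS) (target_time_lt nS) w0).
Qed.

Lemma target_size_le_crossing S : ~~ done S -> target_size S <= #|crossing S|.
Proof.
move=> nS; have [_ l_in _ <-] := target_spec nS.
rewrite -(card_uniqP (plan_uniq nS l_in)) -[#|_|]cardsE subset_leq_card //.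
by apply/subsetP => e'; rewrite !inE; apply: plan_crossing.
Qed.

Lemma step_forest_realized st b : forest st.1 -> st.1 \subset Rz ->
  forest (step src dst Rz plan st b).1 /\ (step src dst Rz plan st b).1 \subset Rz.
Proof.
case: st => S j /= S_forest S_real; rewrite /step.
case: ifPn => // nS; case qE: (query plan S j) => [ed|] //.
case: ifP => // /andP[ed_real _] /=; split.
  by apply: forest_setU1 S_forest _; have [l l_in ed_l] := query_in_plan nS qE;
    apply: plan_crossing l_in ed_l.
by apply/subsetP => z /setU1P[->|/(subsetP S_real)].
Qed.

(** * The potential *)

Section Potential.
Local Open Scope ring_scope.

Lemma expected_decrease (K : realFieldType) (p P w pot pot_hit pot_miss : K) :
  0 <= p -> p < 1 -> 1 <= P -> pot_hit + w + P / (1 - p) <= pot ->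
  (w = 0 /\ pot_miss = pot + P - 1) \/ (1 <= w /\ pot_miss = pot - 1) ->
  1 + (1 - p) * pot_hit + p * pot_miss <= pot.
Proof.
move=> p_ge0 p_lt1 P_ge1 hit_le miss.
have q_gt0 : 0 < 1 - p by rewrite subr_gt0.
have XE : P / (1 - p) * (1 - p) = P by rewrite divfK ?gt_eqF.
have : (1 - p) * pot_hit <= (1 - p) * (pot - w - P / (1 - p)).
  by rewrite ler_pM2l //; lra.
move: XE; set X := P / (1 - p) => XE.
case: miss => [[-> ->]|[w_ge1 ->]] hit'.
- have : 0 <= p * (P - 1) by rewrite mulr_ge0 ?subr_ge0.
  nra.
- have : 0 <= (1 - p) * (w - 1) by apply: mulr_ge0; lra.
  nra.
Qed.

Variables (R : realType) (p rho : R).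
Local Unset Implicit Arguments.
Variable F : forall T : finType, rel T -> Prop.
Local Set Implicit Arguments.
Hypotheses (p_ge0 : 0 <= p) (p_lt1 : p < 1).
Hypotheses (Gsimple : simple_moldgraph src dst) (Fiso : iso_closed F)
  (Fminor : minor_closed F) (Fsparse : sparse_family rho F) (FG : F V (madj src dst)).

Let B := 8 * rho / (1 - p).

(* A success removes at least [target_size] crossing edges, which pays for the
   [wait] term; a miss at the target time (probability p) restarts a whole
   period, which the term [period / (1 - p)] pays for. *)
Definition potential (st : {set E} * nat) : R :=
  if done st.1 then 0 else
  2 * B * #|crossing st.1|%:R - B * (target_size st.1)%:R + (wait st.1 st.2)%:R
  + (period st.1)%:R / (1 - p).

Lemma size_plan_le S : ~~ done S -> (size (plan S))%:R <= 4 * rho.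
Proof.
move=> nS; have [u umin [_ size_le _]] := plan_spec nS.
have [k_gt _ _ _] := target_spec nS.
apply: le_trans (min_degree_le Fiso Fminor Gsimple FG Fsparse nS umin _); first by rewrite ler_nat.
by apply: leq_trans size_le; apply: leq_ltn_trans k_gt.
Qed.

Lemma B_ge0 (v : V) : 0 <= B.
Proof.
have V_gt0 : (0 < #|V|)%N by apply/card_gt0P; exists v.
have : 0 <= rho * #|V|%:R := le_trans (ler0n _ _) (Fsparse FG).
rewrite pmulr_lge0 ?ltr0n // => rho_ge0.
by rewrite /B divr_ge0 // ?mulr_ge0 // subr_ge0 ltW.
Qed.

Lemma potential_le st : potential st <= 2 * B * #|crossing st.1|%:R.
Proof.
rewrite /potential; case: ifPn => [S_conn|nS].
  rewrite (_ : crossing _ = set0) ?cards0 ?mulr0 //; apply/setP => ed.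
  by rewrite !inE (forallP (forallP S_conn _) _).
have q_gt0 : 0 < 1 - p by rewrite subr_gt0.
have w_le : ((wait st.1 st.2)%:R <= (period st.1)%:R :> R).
  by rewrite ler_nat ltnW // countdown_lt // period_gt0.
have period_le : (period st.1)%:R <= 4 * rho * (target_size st.1)%:R.
  by rewrite /period natrM ler_wpM2r // size_plan_le.
have XE : (period st.1)%:R / (1 - p) * (1 - p) = (period st.1)%:R by rewrite divfK ?gt_eqF.
have BE : B * (1 - p) = 8 * rho by rewrite divfK ?gt_eqF.
move: XE w_le period_le; set X := _ / (1 - p); set P := (period _)%:R.
set w := (wait _ _)%:R; set s := (target_size _)%:R => XE w_le period_le.
have wp_ge0 : 0 <= w * p by rewrite mulr_ge0.
have : (w + X) * (1 - p) <= B * s * (1 - p).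
  by rewrite mulrDl XE mulrAC BE; lra.
rewrite ler_pM2r // => ws_le; lra.
Qed.

Lemma potential_ge0 st : 0 <= potential st.
Proof.
rewrite /potential; case: ifPn => // nS.
have B0 : 0 <= B by case/forallPn: nS => v _; apply: B_ge0 v.
have s_le : (target_size st.1)%:R <= #|crossing st.1|%:R :> R.
  by rewrite ler_nat target_size_le_crossing.
have X_ge0 : 0 <= (period st.1)%:R / (1 - p).
  by apply: divr_ge0 => //; rewrite subr_ge0 ltW.
have : 0 <= B * (#|crossing st.1|%:R - (target_size st.1)%:R) by rewrite mulr_ge0 ?subr_ge0.
have : 0 <= B * #|crossing st.1|%:R by rewrite mulr_ge0.
have : 0 <= (wait st.1 st.2)%:R :> R by [].
lra.
Qed.

Lemma potential_miss S j : ~~ done S -> (0 < wait S j)%N ->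
  potential (S, j.+1) = potential (S, j) - 1.
Proof.
move=> nS w_gt0; rewrite /potential /= (negbTE nS) /wait.
by rewrite (countdownS (period_gt0 nS) (target_time_lt nS) w_gt0) -subn1 natrB //; ring.
Qed.

Lemma potential_target_miss S j : ~~ done S -> wait S j = 0%N ->
  potential (S, j.+1) = potential (S, j) + (period S)%:R - 1.
Proof.
move=> nS w0; rewrite /potential /= (negbTE nS) /wait.
rewrite (countdownS0 (period_gt0 nS) (target_time_lt nS) w0) -/(wait S j) w0.
by rewrite -subn1 natrB ?period_gt0 //; ring.
Qed.

Lemma potential_hit S j ed : ~~ done S -> query plan S j = Some ed -> ed \in Rz ->
  potential (ed |: S, 0%N) + (wait S j)%:R + (period S)%:R / (1 - p) <= potential (S, j).
Proof.
move=> nS qE ed_real; have [l l_in ed_l] := query_in_plan nS qE.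
have drop : (#|crossing (ed |: S)| + target_size S <= #|crossing S|)%N.
  apply: leq_trans (card_crossing_setU1 nS l_in ed_l); rewrite leq_add2l.
  by apply: target_size_le => //; apply/hasP; exists ed.
have := potential_le (ed |: S, 0%N); rewrite [potential (S, j)]/potential (negbTE nS) /=.
have B0 : 0 <= B by apply: B_ge0 (src ed).
have : 0 <= B * (#|crossing S|%:R - (#|crossing (ed |: S)|%:R + (target_size S)%:R)).
  by rewrite mulr_ge0 // subr_ge0 -natrD ler_nat.
have : 0 <= B * (target_size S)%:R by rewrite mulr_ge0.
move=> *; lra.
Qed.

Lemma potential_step S j : ~~ done S ->
  1 + (1 - p) * potential (step src dst Rz plan (S, j) true)
    + p * potential (step src dst Rz plan (S, j) false) <= potential (S, j).
Proof.
move=> nS; rewrite /step (negbTE nS).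
have miss : (0 < wait S j)%N ->
    1 + (1 - p) * potential (S, j.+1) + p * potential (S, j.+1) <= potential (S, j).
  by move=> w_gt0; rewrite potential_miss // le_eqVlt; apply/orP; left; apply/eqP; ring.
case qE: (query plan S j) => [ed|]; last first.
  by apply: miss; rewrite lt0n; apply/eqP => /(wait0_realized nS)[r]; rewrite qE.
case: (boolP (ed \in Rz)) => ed_real; last first.
  apply: miss; rewrite lt0n; apply/eqP => /(wait0_realized nS)[r].
  by rewrite qE => -[<-]; apply/negP.
apply: (expected_decrease p_ge0 p_lt1 _ (potential_hit nS qE ed_real)).
  by rewrite ler1n period_gt0.
case: (posnP (wait S j)) => w; [left|right]; split.
- by rewrite w.
- exact: potential_target_miss.
- by rewrite ler1n.
- exact: potential_miss.
Qed.

Lemma potential_le_edges st : potential st <= 2 * B * #|E|%:R.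
Proof.
apply: le_trans (potential_le st) _; case: (posnP #|E|) => [E0|/card_gt0P[ed _]].
  have -> : #|crossing st.1| = 0%N by apply/eqP; rewrite -leqn0 -E0 max_card.
  by rewrite E0.
by rewrite ler_wpM2l ?ler_nat ?max_card // mulr_ge0 // (B_ge0 (src ed)).
Qed.

Lemma sum_prob_not_done_le T :
  \sum_(0 <= t < T) prefix_prob p t (fun w => ~~ done (exec src dst Rz plan w t).1)
  <= 16 / (1 - p) * rho * #|E|%:R.
Proof.
have exec_run w t : exec src dst Rz plan w t = run (step src dst Rz plan) (set0, 0%N) w t.
  by elim: t => [|t IHt] //; rewrite runS -IHt.
have prob_run t : prefix_prob p t (fun w => ~~ done (exec src dst Rz plan w t).1) =
    prefix_prob p t (fun w => ~~ done (run (step src dst Rz plan) (set0, 0%N) w t).1).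
  by apply: eq_prefix_prob => w; rewrite exec_run.
under eq_bigr => t _ do rewrite prob_run.
rewrite (_ : 16 / (1 - p) * rho = 2 * B); last by rewrite /B; field; rewrite subr_eq0 gt_eqF.
apply: le_trans (potential_le_edges (set0, 0%N)).
apply: (sum_prob_running_le (done := fun st : {set E} * nat => done st.1) p_ge0 (ltW p_lt1)
  potential_ge0) => -[S j]; last exact: potential_step.
by move=> b S_done; rewrite /step /= S_done.
Qed.

End Potential.

Lemma exec_forest_realized w t :
  forest (exec src dst Rz plan w t).1 /\ (exec src dst Rz plan w t).1 \subset Rz.
Proof.
elim: t => [|t [t_forest t_real]]; last exact: step_forest_realized.
by split; [apply/forall_inP => ed; rewrite in_set0|apply: sub0set].
Qed.

Lemma prob_spanning_tree (R : realType) (p : R) t :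
  prefix_prob p t (fun w => let S := (exec src dst Rz plan w t).1 in
    [&& done S, spanning_tree src dst S & S \subset Rz]) =
  (1 - prefix_prob p t (fun w => ~~ done (exec src dst Rz plan w t).1))%R.
Proof.
rewrite prefix_probC; congr (_ - _)%R; apply: eq_prefix_prob => w /=.
have [S_forest S_real] := exec_forest_realized w t.
case: (boolP (done _)) => //= S_conn.
by rewrite (forest_spanning_tree S_forest S_conn) S_real.
Qed.

End Discover.

End Connectivity.

Local Open Scope classical_set_scope.
Local Open Scope ring_scope.

Lemma nneseries_le_bound (R : realType) (a : nat -> R) (M : R) :
  (forall t, 0 <= a t) -> (forall T, \sum_(0 <= t < T) a t <= M) ->
  (\sum_(0 <= t <oo) (a t)%:E <= M%:E)%E.
Proof.
move=> a_ge0 le_M; apply: lime_le.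
  by apply: is_cvg_nneseries => t _ _; rewrite lee_fin.
by apply: nearW => T; rewrite sumEFin lee_fin.
Qed.

Lemma cvg0_bounded_series (R : realType) (a : nat -> R) (M : R) :
  (forall t, 0 <= a t) -> (forall T, \sum_(0 <= t < T) a t <= M) -> a @ \oo --> 0.
Proof.
move=> a_ge0 le_M; apply: cvg_series_cvg_0; apply: nondecreasing_is_cvgn.
  by apply: nondecreasing_series => t _ _.
by exists M => _ [T _ <-]; apply: le_M.
Qed.

Unset Implicit Arguments. Set Strict Implicit.

Theorem lemma5 (R : realType) (p : R) (hp0 : 0 <= p) (hp : p < 1 / 2) :
  exists C : R,
    forall (V E : finType) (src dst : E -> V) (F : forall T : finType, rel T -> Prop)
           (rho : R) (Rz : {set E}) (plan : {set E} -> seq (seq E)),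
      simple_moldgraph src dst ->
      graph_class F -> iso_closed F -> minor_closed F -> sparse_family rho F ->
      F V (madj src dst) ->
      connected_spanning src dst Rz ->
      valid_plan src dst plan ->
      (expected_queries p src dst Rz plan <= (C * rho * (#|E|)%:R)%:E)%E /\
      ((fun t : nat => prefix_prob p t (fun w =>
           let S := (exec src dst Rz plan w t).1 in
           [&& connected_spanning src dst S, spanning_tree src dst S & S \subset Rz]))
         @ \oo --> (1 : R)).
Proof.
have p_lt1 : p < 1 by lra.
exists (16 / (1 - p)) => V E src dst F rho Rz plan Gsimple _ Fiso Fminor Fsparse FG Rz_conn
  plan_valid.
pose a t := prefix_prob p t (fun w => ~~ connected_spanning src dst (exec src dst Rz plan w t).1).
have a_ge0 t : 0 <= a t by apply: prefix_prob_ge0 => //; apply: ltW.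
have a_sum := sum_prob_not_done_le Rz_conn plan_valid hp0 p_lt1 Gsimple Fiso Fminor Fsparse FG.
split; first exact: nneseries_le_bound a_ge0 a_sum.
rewrite (funext (prob_spanning_tree Rz_conn plan_valid p)).
by have := cvgB (cvg_cst (1 : R)) (cvg0_bounded_series a_ge0 a_sum); rewrite subr0; apply.
Qed.
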